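(* Let $q\ge4$ be even, let $\alpha,\beta\in\mathbb{F}_{q^2}$ with $\alpha\neq0$, $\beta\notin\mathbb{F}_q$ and $\alpha^{q+1}/(\beta^q+\beta)^2$ of absolute trace $0$, let $R=(0,\delta,1)$ and $U_\infty=(1,0,0)$. If $\ell$ is a line of $\mathrm{PG}(2,q^2)$ not through $U_\infty$, then $\ell$ meets $\mathrm{pedal}(R)$ in at most two points.
   Context: Points of $\mathrm{PG}(2,q^2)$ have homogeneous coordinates $(x,y,z)$. $\delta\in\mathbb{F}_{q^2}\setminus\mathbb{F}_q$ satisfies $\delta^q=1+\delta$ and $\delta^2=v+\delta$ with $v\in\mathbb{F}_q$, $v\ne1$, of absolute trace $1$. $\mathcal U_{\alpha\beta}=\{(x,\alpha x^2+\beta x^{q+1}+r,1): x\in\mathbb{F}_{q^2}, r\in\mathbb{F}_q\}\cup\{(0,1,0)\}$, which under the hypotheses is a unital (a set of $q^3+1$ points meeting every line in $1$ or $q+1$ points), and $R\notin\mathcal U_{\alpha\beta}$. For a point $P$ not on the unital, $\mathrm{pedal}(P)$ is the set of points of contact of the $q+1$ tangent lines (lines meeting the unital in exactly one point) through $P$. *)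

From HB Require Import structures.
From mathcomp Require Import all_boot all_order all_algebra all_field.
Set Implicit Arguments. Unset Strict Implicit. Unset Printing Implicit Defensive.
Import GRing.Theory.
Local Open Scope ring_scope.

(* Homogeneous coordinate triples (x,y,z) over a field; also used for line
   coordinates [a,b,c] (the line a X + b Y + c Z = 0). *)
Record pt (F : Type) := Pt { px : F; py : F; pz : F }.

Section Proj.
Variable F : fieldType.

Definition nz (P : pt F) : Prop := ~ (px P = 0 /\ py P = 0 /\ pz P = 0).

Definition prop (P Q : pt F) : Prop :=
  exists k : F, k != 0 /\ Q = Pt (k * px P) (k * py P) (k * pz P).

Definition incid (l P : pt F) : Prop :=
  px l * px P + py l * py P + pz l * pz P = 0.

Definition inFq (q : nat) (x : F) : Prop := x ^+ q = x.

(* absolute trace (over F_2) of an element of F_q, q = 2^h *)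
Definition abstr (h : nat) (x : F) : F := \sum_(i < h) x ^+ (2 ^ i).

Definition on_unital (q : nat) (alpha beta : F) (P : pt F) : Prop :=
  (exists (x r : F), inFq q r /\
     prop (Pt x (alpha * x ^+ 2 + beta * x ^+ (q + 1) + r) 1) P)
  \/ prop (Pt 0 1 0) P.

Definition tangent (q : nat) (alpha beta : F) (l : pt F) : Prop :=
  nz l /\ exists P, on_unital q alpha beta P /\ incid l P /\
    forall Q, on_unital q alpha beta Q -> incid l Q -> prop P Q.

Definition pedal (q : nat) (alpha beta : F) (R P : pt F) : Prop :=
  exists l, tangent q alpha beta l /\ incid l R /\
    on_unital q alpha beta P /\ incid l P.
End Proj.

From mathcomp Require Import all_boot all_order all_algebra all_field.
From mathcomp Require Import ring.

Set Implicit Arguments.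
Unset Strict Implicit.
Unset Printing Implicit Defensive.
Import GRing.Theory.
Local Open Scope ring_scope.

(* Write b = beta^q + beta and Q(x) = alpha x^2 + (alpha x^2)^q + b x^(q+1).  In
   characteristic 2, Q is a quadratic form on F_(q^2) over F_q with polar form
   b (x^q y + x y^q), and it is anisotropic because the trace of
   alpha^(q+1)/b^2 vanishes.  A line through R other than X = 0 is
   Y = delta + b w^q X, and its affine unital points are the x with
   Q(x + w) = Q(w) + 1.  A nonzero level set of an anisotropic form has more
   than one point (use a transvection), so the line is tangent only if its
   contact point has abscissa x = w; then Q(x) = 1 and y = delta + b x^(q+1).
   On a line not through U_oo these equations force x = k + m Tr(alpha x^2),
   i.e. the abscissae of the pedal points lie on an F_q-line k + F_q m, which
   meets the conic Q = 1 in at most two points. *)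

Section Char2.
Variable F : fieldType.
Hypothesis pchar2 : 2%N \in [pchar F].

Lemma expr2nD n (x y : F) : (x + y) ^+ (2 ^ n) = x ^+ (2 ^ n) + y ^+ (2 ^ n).
Proof. by apply: exprDn_pchar; rewrite pnatX (pnatE _ (pcharf_prime pchar2)) pchar2. Qed.

Lemma sqrrD_pchar2 (x y : F) : (x + y) ^+ 2 = x ^+ 2 + y ^+ 2.
Proof. by have := expr2nD 1 x y; rewrite expn1. Qed.

Lemma abstr_sqr_add n (z : F) : abstr n (z ^+ 2 + z) = z ^+ (2 ^ n) + z.
Proof.
elim: n => [|n IHn]; first by rewrite /abstr big_ord0 expr1 (addrr_pchar2 pchar2).
rewrite /abstr big_ord_recr /= -/(abstr n _) IHn expr2nD -exprM -expnS.
by rewrite addrAC addrCA (addrr_pchar2 pchar2) addr0.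
Qed.

Lemma addr_eq0_pchar2 (x y : F) : (x + y == 0) = (x == y).
Proof. by rewrite addr_eq0 oppr_pchar2. Qed.

End Char2.

Section Projective.
Variable F : fieldType.
Implicit Types (l P Q R : pt F) (x y : F).

Lemma prop_refl P : prop P P.
Proof. by exists 1; rewrite oner_neq0 !mul1r; case: P. Qed.

Lemma prop_euclid P Q R : prop P Q -> prop P R -> prop Q R.
Proof.
move=> [k [k_neq0 ->]] [k' [k'_neq0 ->]]; exists (k' / k).
by rewrite mulf_neq0 ?invr_eq0 //= !mulrA !divfK.
Qed.

Lemma prop_affine x y x' y' : prop (Pt x y 1) (Pt x' y' 1) -> x = x' /\ y = y'.
Proof. by move=> [k [_ [-> -> /esym]]]; rewrite mulr1 => ->; rewrite !mul1r. Qed.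

Lemma incid_prop l P Q : prop P Q -> incid l Q -> incid l P.
Proof.
move=> [k [k_neq0 ->]]; rewrite /incid /= => lQ.
by apply: (mulfI k_neq0); rewrite mulr0 -lQ; ring.
Qed.

Lemma tangent_contact_unique q alpha beta l P Q : tangent q alpha beta l ->
  on_unital q alpha beta P -> incid l P -> on_unital q alpha beta Q -> incid l Q ->
  prop P Q.
Proof.
move=> [_ [P0 [_ [_ uniq0]]]] uP lP uQ lQ.
exact: prop_euclid (uniq0 P uP lP) (uniq0 Q uQ lQ).
Qed.

End Projective.

Lemma quadratic_root_collision (R : idomainType) (a0 a1 a2 t1 t2 t3 : R) : a2 != 0 ->
  a0 + a1 * t1 + a2 * t1 ^+ 2 = 0 -> a0 + a1 * t2 + a2 * t2 ^+ 2 = 0 ->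
  a0 + a1 * t3 + a2 * t3 ^+ 2 = 0 -> t1 = t2 \/ t1 = t3 \/ t2 = t3.
Proof.
move=> a2_neq0 r1 r2 r3; pose p := Poly [:: a0; a1; a2].
have size_p : size p = 3 by rewrite (PolyK (c := 0)).
have root_p t : a0 + a1 * t + a2 * t ^+ 2 = 0 -> root p t.
  by rewrite /root horner_Poly /= => rt; apply/eqP; rewrite -[RHS]rt; ring.
have p_neq0 : p != 0 by rewrite -size_poly_eq0 size_p.
have [uniq_t | ] := boolP (uniq [:: t1; t2; t3]).
  case/eqP: p_neq0; apply: (roots_geq_poly_eq0 (rs := [:: t1; t2; t3])) => //.
    by rewrite /= !root_p.
  by rewrite size_p.
by rewrite /= !inE andbT negb_and !negbK -orbA => /or3P [] /eqP; auto.
Qed.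

Section Unital.
Variables (F : finFieldType) (q h : nat) (alpha beta delta : F).
Hypotheses (cardF : #|F| = (q ^ 2)%N) (q_pow2 : q = (2 ^ h)%N).

Let pchar2 : 2%N \in [pchar F].
Proof. by apply: (card_finPcharP (n := h * 2)); rewrite // cardF q_pow2 -expnM. Qed.

Lemma conjD (x y : F) : (x + y) ^+ q = x ^+ q + y ^+ q.
Proof. by rewrite q_pow2 expr2nD. Qed.

Lemma conjK (x : F) : (x ^+ q) ^+ q = x.
Proof. by rewrite -exprM mulnn -cardF expf_card. Qed.

Local Notation b := (beta ^+ q + beta).

Definition qform (x : F) := alpha * x ^+ 2 + alpha ^+ q * (x ^+ q) ^+ 2 + b * (x ^+ q * x).
Definition polar (x y : F) := b * (x ^+ q * y + x * y ^+ q).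

Lemma b_fixed : b ^+ q = b.
Proof. by rewrite conjD conjK addrC. Qed.

Lemma qform0 : qform 0 = 0.
Proof. by rewrite /qform !expr0n q_pow2 expn_eq0 /=; ring. Qed.

Lemma qformD x y : qform (x + y) = qform x + qform y + polar x y.
Proof. by rewrite /qform /polar conjD !(sqrrD_pchar2 pchar2); ring. Qed.

Lemma qformZ t x : t ^+ q = t -> qform (t * x) = t ^+ 2 * qform x.
Proof. by move=> t_fixed; rewrite /qform !exprMn t_fixed; ring. Qed.

Lemma polarZr t x y : t ^+ q = t -> polar x (t * y) = t * polar x y.
Proof. by move=> t_fixed; rewrite /polar exprMn t_fixed; ring. Qed.

Lemma qform_fixed x : qform x ^+ q = qform x.
Proof. by rewrite /qform !conjD !exprMn b_fixed !conjK; ring. Qed.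

Lemma polar_fixed x y : polar x y ^+ q = polar x y.
Proof. by rewrite /polar exprMn b_fixed conjD !exprMn !conjK; ring. Qed.

Lemma qform_reflect y e t : t ^+ q = t -> t * qform e = polar y e ->
  qform (y + t * e) = qform y.
Proof.
move=> t_fixed teE.
rewrite qformD qformZ // polarZr // -teE expr2 -mulrA -addrA.
by rewrite (addrr_pchar2 pchar2) addr0.
Qed.

Hypotheses (beta_notFq : ~ inFq q beta)
  (trace0 : abstr h (alpha ^+ (q + 1) / b ^+ 2) = 0)
  (delta_conj : delta ^+ q = 1 + delta).

Lemma b_neq0 : b != 0.
Proof.
by apply: contra_notN beta_notFq; rewrite addr_eq0 (oppr_pchar2 pchar2) => /eqP.
Qed.

Lemma qform_anisotropic u : u != 0 -> qform u != 0.
Proof.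
move=> u_neq0; apply/negP; rewrite /qform addr_eq0 (oppr_pchar2 pchar2) => /eqP qu0.
have uq_neq0 : u ^+ q != 0 by rewrite expf_neq0.
pose z := alpha * u ^+ 2 / (b * (u ^+ q * u)).
have zq : z ^+ q = alpha ^+ q * (u ^+ q) ^+ 2 / (b * (u ^+ q * u)).
  rewrite /z exprMn exprVn !exprMn b_fixed !conjK; field.
  by rewrite b_neq0 u_neq0 uq_neq0.
have z_trace : z ^+ q + z = 1.
  rewrite zq /z -mulrDl addrC qu0 divff // !mulf_neq0 //; exact: b_neq0.
have z_sqr : z ^+ 2 + z = alpha ^+ (q + 1) / b ^+ 2.
  have -> : z ^+ 2 + z = z * (z + 1) by ring.
  rewrite -z_trace addrCA (addrr_pchar2 pchar2) addr0 zq /z exprD expr1; field.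
  by rewrite b_neq0 u_neq0 uq_neq0.
by move: trace0; rewrite -z_sqr abstr_sqr_add // -q_pow2 z_trace => /eqP; rewrite oner_eq0.
Qed.

Lemma delta_trace : delta ^+ q + delta = 1.
Proof. by rewrite delta_conj -addrA (addrr_pchar2 pchar2) addr0. Qed.

Lemma polar_delta x : polar x (delta * x) = b * (x ^+ q * x).
Proof.
by rewrite /polar exprMn -[in RHS](mulr1 (_ * _)) -delta_trace; ring.
Qed.

Lemma qform_fiber_nontrivial y : y != 0 -> exists2 y', y' != y & qform y' = qform y.
Proof.
move=> y_neq0.
have delta_neq0 : delta != 0.
  apply: contra_eqN delta_trace => /eqP->; rewrite expr0n q_pow2 expn_eq0 /= addr0.
  by rewrite eq_sym oner_eq0.
have e_neq0 : delta * y != 0 by rewrite mulf_neq0.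
pose t := polar y (delta * y) / qform (delta * y).
have t_fixed : t ^+ q = t by rewrite exprMn exprVn polar_fixed qform_fixed.
have t_neq0 : t != 0.
  rewrite mulf_neq0 ?invr_eq0 ?qform_anisotropic // polar_delta.
  by rewrite !mulf_neq0 ?expf_neq0 ?b_neq0.
exists (y + t * (delta * y)).
  by rewrite -subr_eq0 addrC addKr mulf_neq0.
by rewrite qform_reflect // divfK ?qform_anisotropic.
Qed.

Local Notation R := (Pt 0 delta 1).

Lemma incid_line_R l x y : incid l R -> py l != 0 ->
  incid l (Pt x y 1) <-> y = delta + px l / py l * x.
Proof.
rewrite /incid /= mulr0 add0r !mulr1 => /eqP.
rewrite addr_eq0 (oppr_pchar2 pchar2) => /eqP <- l2_neq0.
split => [/eqP | ->].
  rewrite addrAC addr_eq0 (oppr_pchar2 pchar2) => /eqP lP.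
  by apply: (mulfI l2_neq0); rewrite -lP; field.
have -> : px l * x + py l * (delta + px l / py l * x) + py l * delta =
          (px l * x + py l * delta) + (px l * x + py l * delta) by field.
exact: addrr_pchar2.
Qed.

Lemma unital_line_point w x :
  on_unital q alpha beta (Pt x (delta + b * w ^+ q * x) 1) <-> qform (x + w) = qform w + 1.
Proof.
pose r := delta + b * w ^+ q * x + (alpha * x ^+ 2 + beta * x ^+ (q + 1)).
have rE : r ^+ q + r + qform w = qform (x + w) + 1.
  rewrite /r addn1 (exprSr x q) !conjD !exprMn b_fixed !conjK -delta_trace.
  by rewrite qformD /qform /polar; ring.
have yE r' : alpha * x ^+ 2 + beta * x ^+ (q + 1) + r' = delta + b * w ^+ q * x <-> r' = r.
  rewrite /r; split => [<- | ->].
    by rewrite addrAC (addrr_pchar2 pchar2) add0r.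
  by rewrite addrCA (addrr_pchar2 pchar2) addr0.
split.
  case=> [[x' [r' [r'_fixed /prop_affine [-> /yE r'E]]]] | [k [_ [_ _ /esym/eqP]]]].
    move: rE; rewrite -r'E r'_fixed (addrr_pchar2 pchar2) add0r => ->.
    by rewrite -addrA (addrr_pchar2 pchar2) addr0.
  by rewrite mulr0 eq_sym oner_eq0.
move=> qxw; left; exists x, r; split; last by rewrite (proj2 (yE r)) //; exact: prop_refl.
apply/eqP; rewrite -addr_eq0_pchar2 //; apply/eqP/(addIr (qform w)).
by rewrite rE qxw add0r -addrA (addrr_pchar2 pchar2) addr0.
Qed.

Lemma tangent_R_contact_abscissa w x0 :
  on_unital q alpha beta (Pt x0 (delta + b * w ^+ q * x0) 1) ->
  (forall x, on_unital q alpha beta (Pt x (delta + b * w ^+ q * x) 1) -> x = x0) ->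
  x0 = w.
Proof.
move=> /unital_line_point qx0 contact.
apply/eqP; rewrite -addr_eq0_pchar2 //.
apply: contraT => /qform_fiber_nontrivial [y y_neq qy].
have /contact x1E : on_unital q alpha beta (Pt (y + w) (delta + b * w ^+ q * (y + w)) 1).
  by apply/unital_line_point; rewrite (addrK_pchar2 pchar2) qy.
by move: y_neq; rewrite -x1E (addrK_pchar2 pchar2) eqxx.
Qed.

Lemma tangent_R_py_neq0 l : tangent q alpha beta l -> incid l R -> py l != 0.
Proof.
move=> tl lR; apply/eqP => l2_0.
have l3_0 : pz l = 0 by move: lR; rewrite /incid /= l2_0 mulr0 mul0r !add0r mulr1.
have on_l y z : incid l (Pt 0 y z) by rewrite /incid /= l2_0 l3_0; ring.
have u010 : on_unital q alpha beta (Pt 0 1 0) by right; exact: prop_refl.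
have u011 : on_unital q alpha beta (Pt 0 1 1).
  left; exists 0, 1; split; first exact: expr1n.
  by rewrite addn1 !exprS !mul0r !mulr0 !add0r; exact: prop_refl.
have [k [_ [_ _]]] := tangent_contact_unique tl u010 (on_l 1 0) u011 (on_l 1 1).
by move/eqP; rewrite mulr0 oner_eq0.
Qed.

Lemma pedal_point P : pedal q alpha beta R P ->
  exists2 x, qform x = 1 & prop (Pt x (delta + b * (x ^+ q * x)) 1) P.
Proof.
move=> [l [tl [lR [uP lP]]]].
have l2_neq0 := tangent_R_py_neq0 tl lR.
pose w := (px l / py l / b) ^+ q.
have on_l x y : incid l (Pt x y 1) <-> y = delta + b * w ^+ q * x.
  by rewrite incid_line_R // conjK [b * _]mulrC divfK ?b_neq0.
case: uP => [[x0 [r0 [r0_fixed X0P]]] | infP]; last first.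
  move: l2_neq0; have := incid_prop infP lP.
  by rewrite /incid /= !mulr0 mulr1 add0r addr0 => ->; rewrite eqxx.
have /on_l y0E := incid_prop X0P lP; rewrite y0E in X0P.
have uX0 : on_unital q alpha beta (Pt x0 (delta + b * w ^+ q * x0) 1).
  by left; exists x0, r0; rewrite -y0E; split; last exact: prop_refl.
have x0w : x0 = w.
  apply: (tangent_R_contact_abscissa uX0) => x uX.
  have lX : incid l (Pt x (delta + b * w ^+ q * x) 1) by apply/on_l.
  have lX0 : incid l (Pt x0 (delta + b * w ^+ q * x0) 1) by apply/on_l.
  by have [] := prop_affine (tangent_contact_unique tl uX lX uX0 lX0).
exists x0; last by rewrite mulrA [X in _ * X ^+ q * x0]x0w.
move/unital_line_point: uX0; rewrite -x0w (addrr_pchar2 pchar2) qform0 => /esym/eqP.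
by rewrite addr_eq0_pchar2 // => /eqP.
Qed.

Definition on_Fq_line (k m x : F) := exists2 T, T ^+ q = T & x = k + T * m.

Lemma Fq_line_qform_level_le2 k m c x1 x2 x3 :
  on_Fq_line k m x1 -> on_Fq_line k m x2 -> on_Fq_line k m x3 ->
  qform x1 = c -> qform x2 = c -> qform x3 = c -> x1 = x2 \/ x1 = x3 \/ x2 = x3.
Proof.
move=> [T1 T1_fixed ->] [T2 T2_fixed ->] [T3 T3_fixed ->].
have [-> | m_neq0] := eqVneq m 0; first by rewrite !mulr0; left.
have root_of T : T ^+ q = T -> qform (k + T * m) = c ->
    (qform k - c) + polar k m * T + qform m * T ^+ 2 = 0.
  by move=> T_fixed <-; rewrite qformD qformZ // polarZr //; ring.
move=> /(root_of _ T1_fixed) r1 /(root_of _ T2_fixed) r2 /(root_of _ T3_fixed) r3.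
have [->|[->|->]] := quadratic_root_collision (qform_anisotropic m_neq0) r1 r2 r3; by auto.
Qed.

Lemma pedal_on_line l m n P : px l != 0 -> py l = m * px l -> pz l = n * px l ->
  pedal q alpha beta R P -> incid l P ->
  exists2 x, on_Fq_line (m * (1 + delta) + n) m x &
    qform x = 1 /\ prop (Pt x (delta + b * (x ^+ q * x)) 1) P.
Proof.
move=> l1_neq0 l2E l3E /pedal_point [x qx XP] lP; exists x => //.
pose T := alpha * x ^+ 2 + alpha ^+ q * (x ^+ q) ^+ 2.
have bN : b * (x ^+ q * x) = T + 1.
  by rewrite -qx /qform -/T addrA (addrr_pchar2 pchar2) add0r.
exists T; first by rewrite /T conjD !exprMn !conjK; ring.
apply/eqP; rewrite -addr_eq0_pchar2 //; apply/eqP/(mulfI l1_neq0).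
by have := incid_prop XP lP; rewrite /incid /= bN l2E l3E mulr0 => <-; ring.
Qed.

End Unital.

Theorem lemma3p4 (F : finFieldType) (q h : nat) (alpha beta delta v : F) :
  #|F| = (q ^ 2)%N -> q = (2 ^ h)%N -> (4 <= q)%N ->
  alpha != 0 -> ~ inFq q beta ->
  abstr h (alpha ^+ (q + 1) / (beta ^+ q + beta) ^+ 2) = 0 ->
  ~ inFq q delta -> delta ^+ q = 1 + delta -> delta ^+ 2 = v + delta ->
  inFq q v -> v != 1 -> abstr h v = 1 ->
  forall l P1 P2 P3 : pt F,
    nz l -> ~ incid l (Pt 1 0 0) ->
    pedal q alpha beta (Pt 0 delta 1) P1 -> incid l P1 ->
    pedal q alpha beta (Pt 0 delta 1) P2 -> incid l P2 ->
    pedal q alpha beta (Pt 0 delta 1) P3 -> incid l P3 ->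
    prop P1 P2 \/ prop P1 P3 \/ prop P2 P3.
Proof.
move=> cardF q_pow2 _ _ beta_notFq trace0 _ delta_conj _ _ _ _ l P1 P2 P3 _ l_notU.
have l1_neq0 : px l != 0.
  by apply: contra_not_neq l_notU => l1_0; rewrite /incid /= l1_0; ring.
have l2E : py l = py l / px l * px l by rewrite divfK.
have l3E : pz l = pz l / px l * px l by rewrite divfK.
have on_l := pedal_on_line cardF q_pow2 beta_notFq trace0 delta_conj l1_neq0 l2E l3E.
move=> ped1 lP1 ped2 lP2 ped3 lP3.
have [x1 x1_on [qx1 X1P]] := on_l P1 ped1 lP1.
have [x2 x2_on [qx2 X2P]] := on_l P2 ped2 lP2.
have [x3 x3_on [qx3 X3P]] := on_l P3 ped3 lP3.
have [e|[e|e]] := Fq_line_qform_level_le2 cardF q_pow2 beta_notFq trace0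
  x1_on x2_on x3_on qx1 qx2 qx3.
- by left; rewrite e in X1P; exact: prop_euclid X1P X2P.
- by right; left; rewrite e in X1P; exact: prop_euclid X1P X3P.
- by right; right; rewrite e in X2P; exact: prop_euclid X2P X3P.
Qed.
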